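(* Let $\mathsf U$ be a pseudovariety and $\mathsf V$ a subpseudovariety of $\mathsf U$. Suppose that $\mathsf V=[\![\Sigma]\!]_{\mathsf U}$ for some set $\Sigma$ of $\mathsf U$-pseudoidentities which is h-strong within $\mathsf U$ and each of whose members is t-strong within $\mathsf U$. Let $\Gamma$ be a set of $\mathsf U$-pseudoidentities such that $[\![\Gamma]\!]_{\mathsf U}\subseteq\mathsf V$. If the set $\Gamma'=\{\pi(u)=\pi(v):(u=v)\in\Gamma\}$ is h-strong within $\mathsf V$, then $\Gamma$ is h-strong within $\mathsf U$.
   Context: A pseudovariety is a nonempty class of finite algebras of a fixed finite type closed under homomorphic images, subalgebras and finite direct products. $\Omega_A\mathsf U$ is the free pro-$\mathsf U$ algebra on the finite set $A$; for $\mathsf V\subseteq\mathsf U$, $\pi=\pi_A:\Omega_A\mathsf U\to\Omega_A\mathsf V$ denotes the natural continuous homomorphism fixing the generators (for each finite $A$). A $\mathsf U$-pseudoidentity is $u=v$ with $u,v\in\Omega_B\mathsf U$, $B$ finite; it holds in $T\in\mathsf U$ if both sides agree under every continuous homomorphism $\Omega_B\mathsf U\to T$; $[\![\Gamma]\!]_{\mathsf U}$ is the class of members of $\mathsf U$ satisfying $\Gamma$. Provability (relative to an ambient pseudovariety $\mathsf W$, here $\mathsf U$ or $\mathsf V$): for a set $\Gamma$ of $\mathsf W$-pseudoidentities and finite $A$, $\Gamma_0\subseteq\Omega_A\mathsf W\times\Omega_A\mathsf W$ is the set of pairs $(\mathbf t(\varphi(u),w_1,\dots,w_n),\mathbf t(\varphi(v),w_1,\dots,w_n))$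 with $u=v$ or $v=u$ in $\Gamma$ ($u,v\in\Omega_B\mathsf W$), $\varphi:\Omega_B\mathsf W\to\Omega_A\mathsf W$ a continuous homomorphism, $\mathbf t$ a term, $w_i\in\Omega_A\mathsf W$; $\Gamma_{2\alpha+1}$ is the transitive closure of $\Gamma_{2\alpha}$; $\Gamma_{2\alpha+2}$ the topological closure of $\Gamma_{2\alpha+1}$; unions at limit ordinals; $u=v$ is provable from $\Gamma$ if $(u,v)\in\bigcup_\alpha\Gamma_\alpha$. A set $\Gamma$ of $\mathsf W$-pseudoidentities is h-strong within $\mathsf W$ if every $\mathsf W$-pseudoidentity valid in $[\![\Gamma]\!]_{\mathsf W}$ is provable from $\Gamma$. A $\mathsf W$-pseudoidentity $\varepsilon$ is t-strong within $\mathsf W$ if $\varepsilon$ is provable from every set $\Gamma$ of $\mathsf W$-pseudoidentities such that $[\![\Gamma]\!]_{\mathsf W}$ satisfies $\varepsilon$. *)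

From Stdlib Require Import FunctionalExtensionality List.
From mathcomp Require Import all_boot.

Set Implicit Arguments.
Unset Strict Implicit.
Unset Printing Implicit Defensive.

Record signature := Signature { symb : finType; arity : symb -> nat }.

Section Defs.
Variable L : signature.

Record alg := Alg {
  carrier :> finType;
  aop : forall o : symb L, ('I_(arity o) -> carrier) -> carrier }.

Definition ophom (X Y : Type)
  (opX : forall o : symb L, ('I_(arity o) -> X) -> X)
  (opY : forall o : symb L, ('I_(arity o) -> Y) -> Y) (h : X -> Y) :=
  forall o (x : 'I_(arity o) -> X), h (opX o x) = opY o (h \o x).

Definition is_hom (S T : alg) (h : S -> T) := ophom (@aop S) (@aop T) h.

Inductive term := Var of nat | App (o : symb L) of ('I_(arity o) -> term).

Fixpoint teval (X : Type) (opX : forall o : symb L, ('I_(arity o) -> X) -> X)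
  (env : nat -> X) (t : term) : X :=
  match t with
  | Var i => env i
  | App o ts => opX o (fun i => teval opX env (ts i))
  end.

Definition aclass := alg -> Prop.

Definition prod_alg (S T : alg) : alg :=
  @Alg (S * T)%type
    (fun o x => (aop (fun i => (x i).1), aop (fun i => (x i).2))).

Definition unit_alg : alg := @Alg unit (fun _ _ => tt).

(* pseudovariety: nonempty, closed under H, S, and finite direct products
   (binary products and the empty product = trivial algebra) *)
Definition pseudovariety (P : aclass) : Prop :=
  [/\ (exists S, P S),
      (forall (S T : alg) (h : S -> T), is_hom h -> (forall y, exists x, h x = y) ->
          P S -> P T),
      (forall (S T : alg) (h : T -> S), is_hom h -> injective h -> P S -> P T),
      (forall S T, P S -> P T -> P (prod_alg S T)) &
      P unit_alg].

(* The free pro-U algebra on A, realized as the algebra of A-ary implicit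
   operations on U: families (w_S(f))_{S in U, f : A -> S} natural w.r.t.
   homomorphisms between members of U. *)
Section Free.
Variables (U : aclass) (A : finType).

Definition natural (w : forall S : alg, U S -> (A -> S) -> S) :=
  forall (S T : alg) (hS : U S) (hT : U T) (h : S -> T), is_hom h ->
    forall f : A -> S, h (w S hS f) = w T hT (h \o f).

Record free := Free { fam : forall S : alg, U S -> (A -> S) -> S;
                      famP : natural fam }.

Definition freeop_fam o (ws : 'I_(arity o) -> free) :
  forall S : alg, U S -> (A -> S) -> S :=
  fun S hS f => @aop S o (fun i => fam (ws i) hS f).

Lemma freeop_nat o (ws : 'I_(arity o) -> free) : natural (freeop_fam ws).
Proof.
move=> S T hS hT h hh f; rewrite /freeop_fam hh; congr aop.
apply: functional_extensionality => i /=; exact: famP.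
Qed.

Definition freeop o (ws : 'I_(arity o) -> free) : free :=
  Free (freeop_nat ws).

(* Topology: product topology, with basic neighbourhoods given by finitely
   many "tests" (S in U, f : A -> S), each evaluated into the discrete S. *)
Record test := Test { tS : alg; tU : U tS; tf : A -> tS }.

Definition tval (w : free) (t : test) : tS t := fam w (tU t) (tf t).

Definition agree (F : list test) (w w' : free) :=
  forall t, Stdlib.Lists.List.In t F -> tval w' t = tval w t.

End Free.

Definition cont_free (U : aclass) (B A : finType) (phi : free U B -> free U A) :=
  forall (w : free U B) (t : test U A), exists F : list (test U B),
    forall w', agree F w w' -> tval (phi w') t = tval (phi w) t.

Definition cont_alg (U : aclass) (B : finType) (T : alg) (g : free U B -> T) :=
  forall w : free U B, exists F : list (test U B),
    forall w', agree F w w' -> g w' = g w.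

Definition closure (U : aclass) (A : finType) (R : free U A -> free U A -> Prop)
  (u v : free U A) :=
  forall F : list (test U A), exists u' v', R u' v' /\ agree F u u' /\ agree F v v'.

Definition pset (U : aclass) := forall B : finType, free U B -> free U B -> Prop.

Definition ecase (X : Type) (x : X) (w : nat -> X) (i : nat) : X :=
  match i with 0 => x | j.+1 => w j end.

Definition gamma0 (U : aclass) (G : pset U) (A : finType) (p q : free U A) :=
  exists (B : finType) (u v : free U B), (G B u v \/ G B v u) /\
  exists phi : free U B -> free U A,
    ophom (@freeop U B) (@freeop U A) phi /\ cont_free phi /\
    exists (t : term) (w : nat -> free U A),
      p = teval (@freeop U A) (ecase (phi u) w) t /\
      q = teval (@freeop U A) (ecase (phi v) w) t.

(* provable = member of the union of the transfinite sequence Gamma_alpha,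
   i.e. of the least relation containing Gamma_0 that is transitive and
   topologically closed *)
Definition provable (U : aclass) (G : pset U) (A : finType) (u v : free U A) :=
  forall R : free U A -> free U A -> Prop,
    (forall p q, gamma0 G p q -> R p q) ->
    (forall p q r, R p q -> R q r -> R p r) ->
    (forall p q, closure R p q -> R p q) ->
    R u v.

Definition sat (U : aclass) (B : finType) (T : alg) (u v : free U B) :=
  forall g : free U B -> T, ophom (@freeop U B) (@aop T) g -> cont_alg g ->
    g u = g v.

Definition models (U : aclass) (G : pset U) (T : alg) :=
  forall B (u v : free U B), G B u v -> sat T u v.

Definition h_strong (U : aclass) (G : pset U) :=
  forall (B : finType) (u v : free U B),
    (forall T, U T -> models G T -> sat T u v) -> provable G u v.

Definition t_strong (U : aclass) (B : finType) (u v : free U B) :=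
  forall G : pset U, (forall T, U T -> models G T -> sat T u v) -> provable G u v.

Section Restr.
Variables (U V : aclass) (sub : forall S, V S -> U S) (A : finType).

Lemma restr_nat (w : free U A) :
  natural (fun S (hS : V S) (f : A -> S) => fam w (sub hS) f).
Proof. move=> S T hS hT h hh f; exact: famP. Qed.

Definition restr (w : free U A) : free V A := Free (restr_nat w).
End Restr.

Definition pimage (U V : aclass) (sub : forall S, V S -> U S) (G : pset U) : pset V :=
  fun B p q => exists u v, G B u v /\ p = restr sub u /\ q = restr sub v.

End Defs.

(* Write pi for the restriction map from Omega_A U to Omega_A V. First, pi p = pi q implies that p = q is provable from Gamma: it holds
   in V = [[Sigma]], so it is provable from Sigma, which is h-strong, and each member
   of Sigma is provable from Gamma, being t-strong and valid in [[Gamma]], which is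
   contained in V. Second, every pair provable from Gamma' is the image under pi of
   a pair provable from Gamma, by induction on the proof: the basic pairs of Gamma'
   lift together with their substitutions and contexts, transitivity steps are glued
   with the first fact, and closure steps go through by compactness of Omega_A U.
   Now if u = v holds in [[Gamma]] then pi u = pi v holds in [[Gamma']], hence is
   provable from Gamma', and lifting that proof gives Gamma |- u = v. *)

From Pilot Require Import Defs.
From mathcomp Require Import all_boot.
From mathcomp Require Import boolp.

Set Implicit Arguments.
Unset Strict Implicit.
Unset Printing Implicit Defensive.

Local Notation "X `<=` Y" := (forall x, X x -> Y x)
  (at level 70, no associativity, only parsing).

(** * Zorn's lemma and ultrafilters *)

(* The Zorn lemma and ultrafilter lemma of mathcomp-classical fix the universe of
   the carrier below that of [finType], so they do not apply to lists of tests;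
   hence the Bourbaki-Witt tower argument below. *)

Lemma set_ext (T : Type) (X Y : T -> Prop) : X `<=` Y -> Y `<=` X -> X = Y.
Proof. by move=> XY YX; apply: funext => x; apply: propext; split=> [/XY|/YX]. Qed.

Definition chain (T : Type) (C : (T -> Prop) -> Prop) :=
  forall X Y, C X -> C Y -> X `<=` Y \/ Y `<=` X.

Section ZornSets.
Variables (T : Type) (P : (T -> Prop) -> Prop) (X0 : T -> Prop).
Hypothesis P_chain : forall C, (forall X, C X -> P X) -> chain C -> (exists X, C X) ->
  P (fun x => exists2 X, C X & X x).
Hypothesis P_X0 : P X0.

Definition zorn_above X := P X /\ X0 `<=` X.

Definition zorn_sup (C : (T -> Prop) -> Prop) : T -> Prop :=
  fun x => X0 x \/ exists2 X, C X & X x.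

Definition zorn_next X : T -> Prop :=
  if pselect (exists Y, [/\ zorn_above Y, X `<=` Y & ~ Y `<=` X]) is left e
  then projT1 (cid e) else X.

Lemma zorn_sup_above C :
  (forall X, C X -> zorn_above X) -> chain C -> zorn_above (zorn_sup C).
Proof.
move=> CP cC; split; last by move=> x; left.
have [[X CX]|noC] := pselect (exists X, C X).
  have -> : zorn_sup C = fun x => exists2 X, C X & X x.
    apply: set_ext => x; last by right.
    by case=> [/((CP X CX).2) Xx|//]; exists X.
  by apply: P_chain => //; [move=> Y /CP[] | exists X].
have -> : zorn_sup C = X0.
  apply: set_ext => x; last by left.
  by case=> // -[Y CY]; case: noC; exists Y.
exact: P_X0.
Qed.

Lemma zorn_next_incl X : X `<=` zorn_next X.
Proof. by rewrite /zorn_next; case: pselect => // e; case: (cid e) => Y [] /=. Qed.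

Lemma zorn_next_above X : zorn_above X -> zorn_above (zorn_next X).
Proof. by rewrite /zorn_next; case: pselect => // e; case: (cid e) => Y [] /=. Qed.

Lemma zorn_next_max X : zorn_next X `<=` X ->
  forall Y, zorn_above Y -> X `<=` Y -> Y `<=` X.
Proof.
rewrite /zorn_next; case: pselect => [e|ne].
  by case: (cid e) => Y [_ _ nYX] /= YX; case: nYX.
by move=> _ Y aY XY; apply: contrapT => nYX; apply: ne; exists Y.
Qed.

Inductive tower : (T -> Prop) -> Prop :=
| tower_next X : tower X -> tower (zorn_next X)
| tower_sup C : (forall X, C X -> tower X) -> chain C -> tower (zorn_sup C).

Lemma tower_above X : tower X -> zorn_above X.
Proof.
elim=> [Y _|C _ CP cC]; [exact: zorn_next_above | exact: zorn_sup_above].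
Qed.

(* Every tower element is extreme ([tower_extreme]), which makes the tower a chain. *)
Definition extreme (c : T -> Prop) :=
  forall X, tower X -> X `<=` c -> ~ c `<=` X -> zorn_next X `<=` c.

Lemma extreme_split c : tower c -> extreme c ->
  forall X, tower X -> X `<=` c \/ zorn_next c `<=` X.
Proof.
move=> Tc ec X; elim=> {X} [X TX [Xc|cX]|C CT IH cC].
- have [cX|ncX] := pselect (c `<=` X); last by left; exact: ec.
  by right; rewrite (set_ext Xc cX).
- by right=> x /cX; exact: zorn_next_incl.
- have [[X CX cX]|nX] := pselect (exists2 X, C X & zorn_next c `<=` X).
    by right=> x /cX Xx; right; exists X.
  left=> x [/((tower_above Tc).2)//|[X CX Xx]].
  by case: (IH X CX) => [/(_ x Xx)//|cX]; case: nX; exists X.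
Qed.

Lemma tower_extreme c : tower c -> extreme c.
Proof.
elim=> {c} [c Tc ec|C CT IH cC] X TX.
  move=> Xc ncX; case: (extreme_split Tc ec TX) => [{}Xc|//].
  have [cX|ncX'] := pselect (c `<=` X); first by rewrite (set_ext Xc cX).
  by move=> x /(ec X TX Xc ncX'); exact: zorn_next_incl.
move=> XC nCX.
have [[c Cc ncX]|allC] := pselect (exists2 c, C c & ~ zorn_next c `<=` X); last first.
  case: nCX => x [/((tower_above TX).2)//|[c Cc cx]].
  have cX : zorn_next c `<=` X by apply: contrapT => ncX; apply: allC; exists c.
  exact/cX/zorn_next_incl.
case: (extreme_split (CT c Cc) (IH c Cc) TX) => [Xc|//].
have [cX|ncX'] := pselect (c `<=` X); last first.
  by move=> x /(IH c Cc X TX Xc ncX') cx; right; exists c.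
rewrite (set_ext Xc cX) in nCX *.
have [[d Cd ndc]|alld] := pselect (exists2 d, C d & ~ d `<=` c); last first.
  case: nCX => x [/((tower_above (CT c Cc)).2)//|[d Cd dx]].
  have dc : d `<=` c by apply: contrapT => ndc; apply: alld; exists d.
  exact: dc.
have cd : c `<=` d by case: (cC c d Cc Cd).
by move=> x /(IH d Cd c (CT c Cc) cd ndc) dx; right; exists d.
Qed.

Lemma tower_chain : chain tower.
Proof.
move=> X Y TX TY; case: (extreme_split TY (tower_extreme TY) TX) => [|YX]; first by left.
by right=> x /zorn_next_incl; exact: YX.
Qed.

Lemma zorn_sets : exists M, [/\ P M, X0 `<=` M & forall X, P X -> M `<=` X -> X `<=` M].
Proof.
have Tm : tower (zorn_sup tower) by apply: tower_sup tower_chain.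
have [Pm X0m] := tower_above Tm.
exists (zorn_sup tower); split=> // X PX mX.
apply: (zorn_next_max _ (conj PX _) mX) => [x mx|x /X0m /mX //].
by right; exists (zorn_next (zorn_sup tower)) => //; exact: tower_next.
Qed.

End ZornSets.

Definition proper_filter (D : Type) (F : (D -> Prop) -> Prop) :=
  [/\ F (fun _ => True), (forall Y Z, F Y -> F Z -> F (fun x => Y x /\ Z x)),
      (forall Y Z : D -> Prop, Y `<=` Z -> F Y -> F Z) & ~ F (fun _ => False)].

Section ProperFilter.
Variables (D : Type) (F : (D -> Prop) -> Prop).
Hypothesis pF : proper_filter F.

Lemma filterS (Y Z : D -> Prop) : Y `<=` Z -> F Y -> F Z.
Proof. by case: pF => _ _ + _; apply. Qed.

Lemma filterI (Y Z : D -> Prop) : F Y -> F Z -> F (fun x => Y x /\ Z x).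
Proof. by case: pF => _ + _ _; apply. Qed.

Lemma filter_ex (Y : D -> Prop) : F Y -> exists x, Y x.
Proof.
move=> FY; apply: contrapT => nY; case: pF => _ _ _; apply.
by apply: filterS FY => x Yx; apply: nY; exists x.
Qed.

Lemma filter_forall_in (I : Type) (l : seq I) (P : I -> D -> Prop) :
  (forall i, List.In i l -> F (P i)) -> F (fun x => forall i, List.In i l -> P i x).
Proof.
elim: l => [|i l IH] Pl; first by case: pF => FT _ _ _; apply: filterS FT => x _ i [].
apply: filterS (filterI (Pl i (or_introl erefl)) (IH (fun j jl => Pl j (or_intror jl)))).
by move=> x [Pix Plx] j [<-|/Plx].
Qed.

End ProperFilter.

Definition cofinal (I : Type) (Y : seq I -> Prop) :=
  exists l, forall F, List.incl l F -> Y F.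

Lemma cofinal_proper (I : Type) : proper_filter (@cofinal I).
Proof.
split; first by exists nil.
- move=> Y Z [l1 Yl1] [l2 Zl2]; exists (l1 ++ l2) => F sF; split.
    by apply: Yl1; apply: List.incl_tran sF; exact: List.incl_appl.
  by apply: Zl2; apply: List.incl_tran sF; exact: List.incl_appr.
- by move=> Y Z YZ [l Yl]; exists l => F /Yl /YZ.
- by case=> l /(_ l (List.incl_refl l)).
Qed.

Lemma proper_filter_chain_union (D : Type) (C : ((D -> Prop) -> Prop) -> Prop) :
  (forall G, C G -> proper_filter G) -> chain C -> (exists G, C G) ->
  proper_filter (fun Y => exists2 G, C G & G Y).
Proof.
move=> CP cC [G CG]; split.
- by exists G => //; case: (CP G CG).
- move=> Y Z [G1 CG1 G1Y] [G2 CG2 G2Z].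
  case: (cC G1 G2 CG1 CG2) => [G12|G21].
    by exists G2 => //; apply: (filterI (CP G2 CG2)) => //; exact: G12.
  by exists G1 => //; apply: (filterI (CP G1 CG1)) => //; exact: G21.
- by move=> Y Z YZ [G1 CG1 G1Y]; exists G1 => //; exact (filterS (CP G1 CG1) YZ G1Y).
- by case=> G1 /CP[].
Qed.

Lemma ultrafilter_refine (D : Type) (F0 : (D -> Prop) -> Prop) : proper_filter F0 ->
  exists UF, [/\ F0 `<=` UF, proper_filter UF & forall Y, UF Y \/ UF (fun x => ~ Y x)].
Proof.
move=> pF0; have [M [pM F0M Mmax]] := zorn_sets (@proper_filter_chain_union D) pF0.
exists M; split=> // Y; apply: contrapT => /not_orP[nMY nMnY].
pose H Z := exists2 Y', M Y' & forall x, Y x -> Y' x -> Z x.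
have pH : proper_filter H.
  have [MT _ _ _] := pM; split.
  - by exists (fun _ => True).
  - move=> Z1 Z2 [Y1 MY1 H1] [Y2 MY2 H2]; exists (fun x => Y1 x /\ Y2 x).
      exact: filterI.
    by move=> x Yx [Y1x Y2x]; split; [exact: H1 | exact: H2].
  - by move=> Z1 Z2 Z12 [Y1 MY1 H1]; exists Y1 => // x Yx /(H1 x Yx)/Z12.
  - case=> Y1 MY1 H1; apply: nMnY; apply: filterS MY1 => // x Y1x Yx; exact: H1 x Yx Y1x.
apply: nMY; apply: (Mmax H pH) => [Z MZ|]; first by exists Z.
by exists (fun _ => True); case: pM.
Qed.

Section UltraLimit.
Variables (D : Type) (UF : (D -> Prop) -> Prop).
Hypotheses (pUF : proper_filter UF) (uUF : forall Y, UF Y \/ UF (fun x => ~ Y x)).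

Lemma ultra_finite_limit (S : finType) (v : D -> S) : exists s, UF (fun x => v x = s).
Proof.
have : UF (fun x => v x \in enum S).
  by case: pUF => UFT _ _ _; apply: filterS UFT => // x _; rewrite mem_enum.
elim: (enum S) => [/(filter_ex pUF)[]//|s l IH UFl].
case: (uUF (fun x => v x = s)) => [vs|nvs]; first by exists s.
apply: IH; apply: filterS (filterI pUF UFl nvs) => // x [].
by rewrite in_cons => /predU1P[].
Qed.

Lemma ultra_limit_uniq (S : Type) (v : D -> S) s1 s2 :
  UF (fun x => v x = s1) -> UF (fun x => v x = s2) -> s1 = s2.
Proof. by move=> v1 v2; have [x [<- <-]] := filter_ex pUF (filterI pUF v1 v2). Qed.

Definition ulim (S : finType) (v : D -> S) : S := projT1 (cid (ultra_finite_limit v)).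

Lemma ulimP (S : finType) (v : D -> S) : UF (fun x => v x = ulim v).
Proof. exact: projT2 (cid (ultra_finite_limit v)). Qed.

End UltraLimit.

(** * Terms and free pro-W algebras *)

Section Terms.
Variable L : signature.
Implicit Types (X Y : Type) (t : term L).

Lemma teval_hom X Y (opX : forall o : symb L, ('I_(arity o) -> X) -> X)
    (opY : forall o : symb L, ('I_(arity o) -> Y) -> Y) (h : X -> Y) env t :
  ophom opX opY h -> h (teval opX env t) = teval opY (h \o env) t.
Proof.
move=> hh; elim: t => [i|o ts IH] //=; rewrite hh; congr (opY o).
by apply: funext => i /=; exact: IH.
Qed.

Fixpoint tsubst t (s : nat -> term L) : term L :=
  match t with Var i => s i | App o ts => App (fun i => tsubst (ts i) s) end.

Lemma teval_subst X (opX : forall o : symb L, ('I_(arity o) -> X) -> X) env t s :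
  teval opX env (tsubst t s) = teval opX (fun i => teval opX env (s i)) t.
Proof. by elim: t => [i|o ts IH] //=; congr (opX o); apply: funext => i. Qed.

(* The parameters of the combined context interleave those of the two contexts:
   the inner ones at even positions, the outer ones at odd positions. *)
Lemma teval_ecase_nest X (opX : forall o : symb L, ('I_(arity o) -> X) -> X)
    (w1 w : nat -> X) t1 t :
  exists t2 w2, forall x,
    teval opX (ecase (teval opX (ecase x w1) t1) w) t = teval opX (ecase x w2) t2.
Proof.
exists (tsubst t (ecase (tsubst t1 (ecase (Var L 0) (fun j => Var L j.*2.+1)))
                        (fun j => Var L j.*2.+2))).
exists (fun k => if odd k then w k./2 else w1 k./2) => x.
rewrite teval_subst; congr teval; apply: funext => -[|j] /=.
  rewrite teval_subst; congr teval; apply: funext => -[|i] //=.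
  by rewrite odd_double doubleK.
by rewrite odd_double /= uphalf_double.
Qed.

End Terms.

Section Generated.
Variables (L : signature) (X : Type) (opX : forall o : symb L, ('I_(arity o) -> X) -> X).
Variables (B : Type) (f : B -> X).

Inductive generated : X -> Prop :=
| generated_gen b : generated (f b)
| generated_op (o : symb L) (xs : 'I_(arity o) -> X) :
    (forall i, generated (xs i)) -> generated (@opX o xs).

End Generated.

Lemma generated_image (L : signature) (X Y : Type)
    (opX : forall o : symb L, ('I_(arity o) -> X) -> X)
    (opY : forall o : symb L, ('I_(arity o) -> Y) -> Y)
    (h : X -> Y) (B : Type) (f : B -> X) (y : Y) :
  ophom opX opY h -> generated opY (h \o f) y -> exists2 x, generated opX f x & h x = y.
Proof.
move=> hh; elim=> [b|o ys _ IH]; first by exists (f b) => //; exact: generated_gen.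
have /choice[xs hxs] : forall i, exists x, generated opX f x /\ h x = ys i.
  by move=> i; have [x ? ?] := IH i; exists x.
exists (opX o xs); first by apply: generated_op => i; case: (hxs i).
by rewrite hh; congr opY; apply: funext => i; case: (hxs i).
Qed.

Section FreeAlgebra.
Variables (L : signature) (W : aclass L).

Lemma free_eq (A : finType) (w1 w2 : free W A) :
  (forall S (hS : W S) f, fam w1 hS f = fam w2 hS f) -> w1 = w2.
Proof.
case: w1 w2 => [f1 p1] [f2 p2] /= eq12.
have E : f1 = f2.
  by apply: functional_extensionality_dep => S; apply: funext => hS; apply: funext.
by subst f2; rewrite (Prop_irrelevance p1 p2).
Qed.

Definition free_gen (A : finType) (a : A) : free W A :=
  @Free L W A (fun S _ f => f a) (fun S T hS hT h hh f => erefl).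

Lemma fam_teval (A : finType) (env : nat -> free W A) t (S : alg L) (hS : W S) f :
  fam (teval (@freeop L W A) env t) hS f = teval (@aop L S) (fun i => fam (env i) hS f) t.
Proof.
elim: t => [i|o ts IH] //=; rewrite /freeop_fam /=; congr aop.
by apply: funext => i; exact: IH.
Qed.

Lemma fam_hom (A : finType) (S : alg L) (hS : W S) (f : A -> S) :
  ophom (@freeop L W A) (@aop L S) (fun z => fam z hS f).
Proof. by []. Qed.

Lemma fam_cont (A : finType) (S : alg L) (hS : W S) (f : A -> S) :
  cont_alg (fun z : free W A => fam z hS f).
Proof. by move=> w; exists [:: Test hS f] => w' ag; exact: (ag _ (or_introl erefl)). Qed.

Lemma agree_cat (A : finType) (F1 F2 : seq (test W A)) (w w' : free W A) :
  agree (F1 ++ F2) w w' <-> agree F1 w w' /\ agree F2 w w'.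
Proof.
split=> [ag|[ag1 ag2] t ht]; last first.
  by case: (List.in_app_or _ _ _ ht); [exact: ag1 | exact: ag2].
by split=> t ht; apply: ag; apply: List.in_or_app; [left|right].
Qed.

Lemma cont_agree (B A : finType) (phi : free W B -> free W A) :
  cont_free phi -> forall w (F : seq (test W A)), exists F1 : seq (test W B),
  forall w', agree F1 w w' -> agree F (phi w) (phi w').
Proof.
move=> cphi w; elim=> [|t F [F1 IH]]; first by exists nil => w' _ t [].
have [Ft Ht] := cphi w t; exists (Ft ++ F1) => w' /agree_cat[/Ht agt /IH agF].
by move=> t' [<-|/agF].
Qed.

Lemma hom_comp (B C A : finType) (psi : free W B -> free W C) (phi : free W C -> free W A) :
  ophom (@freeop L W B) (@freeop L W C) psi -> ophom (@freeop L W C) (@freeop L W A) phi ->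
  ophom (@freeop L W B) (@freeop L W A) (phi \o psi).
Proof. by move=> hpsi hphi o x /=; rewrite hpsi hphi. Qed.

Lemma cont_comp (B C A : finType) (psi : free W B -> free W C) (phi : free W C -> free W A) :
  cont_free psi -> cont_free phi -> cont_free (phi \o psi).
Proof.
move=> cpsi cphi w t; have [F HF] := cphi (psi w) t.
by have [F1 H1] := cont_agree cpsi w F; exists F1 => w' /H1; exact: HF.
Qed.

Lemma fsubst_natural (B A : finType) (g : B -> free W A) (z : free W B) :
  natural (fun S (hS : W S) f => fam z hS (fun b => fam (g b) hS f)).
Proof.
move=> S T hS hT h hh f; rewrite (famP z hS hT hh); congr (fam z hT).
by apply: funext => b /=; exact: famP.
Qed.

Definition fsubst (B A : finType) (g : B -> free W A) (z : free W B) : free W A :=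
  Free (fsubst_natural g z).

Lemma fsubst_hom (B A : finType) (g : B -> free W A) :
  ophom (@freeop L W B) (@freeop L W A) (fsubst g).
Proof. by move=> o x; apply: free_eq. Qed.

Lemma fsubst_cont (B A : finType) (g : B -> free W A) : cont_free (fsubst g).
Proof.
move=> w t; exists [:: Test (tU t) (fun b => Defs.tval (g b) t)] => w' ag.
exact: (ag _ (or_introl erefl)).
Qed.

End FreeAlgebra.

(* Compactness of free pro-W algebras. *)
Lemma free_ultralimit (L : signature) (W : aclass L) (A : finType)
    (D : Type) (UF : (D -> Prop) -> Prop) (w : D -> free W A) :
  proper_filter UF -> (forall Y, UF Y \/ UF (fun x => ~ Y x)) ->
  exists wl : free W A, forall t, UF (fun x => Defs.tval (w x) t = Defs.tval wl t).
Proof.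
move=> pUF uUF.
have natl : natural (fun S (hS : W S) f => ulim pUF uUF (fun x => fam (w x) hS f)).
  move=> S T hS hT h hh f; apply: (ultra_limit_uniq pUF _ (ulimP pUF uUF _)).
  apply: (filterS pUF _ (ulimP pUF uUF (fun x => fam (w x) hS f))) => x /= <-.
  by rewrite (famP (w x) hS hT hh).
by exists (Free natl) => t; exact: (ulimP pUF uUF (fun x => fam (w x) (tU t) (tf t))).
Qed.

(** * Provability *)

Section Provability.
Variables (L : signature) (W : aclass L) (G : pset W).

Lemma provable_gamma0 (A : finType) (p q : free W A) : gamma0 G p q -> provable G p q.
Proof. by move=> pq R ? _ _; auto. Qed.

Lemma provable_trans (A : finType) (p q r : free W A) :
  provable G p q -> provable G q r -> provable G p r.
Proof. by move=> pq qr R h0 hT hC; apply: (hT _ q); [exact: pq | exact: qr]. Qed.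

Lemma provable_closed (A : finType) (p q : free W A) :
  Defs.closure (@provable L W G A) p q -> provable G p q.
Proof.
move=> pq R h0 hT hC; apply: (hC) => F; have [p' [q' [pq' ag]]] := pq F.
by exists p', q'; split => //; exact: pq' h0 hT hC.
Qed.

Lemma provable_sym (A : finType) (p q : free W A) : provable G p q -> provable G q p.
Proof.
move=> pq; apply: (pq (fun a b => provable G b a)).
- move=> a b [B [u [v [Guv [phi [hphi [cphi [t [w [-> ->]]]]]]]]]].
  apply: provable_gamma0; exists B, v, u; split; first by case: Guv; [right|left].
  by exists phi; split => //; split => //; exists t, w.
- by move=> a b c ab bc; exact: provable_trans bc ab.
- move=> a b ab; apply: provable_closed => F; have [a' [b' [? [? ?]]]] := ab F.
  by exists b', a'.
Qed.

Lemma provable_subst (B A : finType) (phi : free W B -> free W A) (u v : free W B) :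
  ophom (@freeop L W B) (@freeop L W A) phi -> cont_free phi ->
  provable G u v -> provable G (phi u) (phi v).
Proof.
move=> hphi cphi uv; apply: (uv (fun a b => provable G (phi a) (phi b))).
- move=> a b [B1 [u1 [v1 [Guv [psi [hpsi [cpsi [t [w [-> ->]]]]]]]]]].
  apply: provable_gamma0; exists B1, u1, v1; split => //.
  exists (phi \o psi); split; first exact: hom_comp.
  split; first exact: cont_comp.
  exists t, (phi \o w); rewrite !(teval_hom _ _ hphi).
  by split; congr teval; apply: funext => -[|i].
- by move=> a b c; exact: provable_trans.
- move=> a b ab; apply: provable_closed => F.
  have [Fa Ha] := cont_agree cphi a F; have [Fb Hb] := cont_agree cphi b F.
  have [a' [b' [ab' [/agree_cat[/Ha ? _] /agree_cat[_ /Hb ?]]]]] := ab (Fa ++ Fb).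
  by exists (phi a'), (phi b').
Qed.

Lemma provable_ctx (A : finType) (a b : free W A) t w :
  provable G a b ->
  provable G (teval (@freeop L W A) (ecase a w) t) (teval (@freeop L W A) (ecase b w) t).
Proof.
move=> ab; move: t w; apply: (ab (fun a b => forall t w,
    provable G (teval (@freeop L W A) (ecase a w) t)
               (teval (@freeop L W A) (ecase b w) t))).
- move=> p q [B [u [v [Guv [phi [hphi [cphi [t1 [w1 [-> ->]]]]]]]]]] t w.
  have [t2 [w2 nest]] := teval_ecase_nest (@freeop L W A) w1 w t1 t.
  apply: provable_gamma0; exists B, u, v; split => //.
  by exists phi; split => //; split => //; exists t2, w2; rewrite !nest.
- by move=> p q r pq qr t w; exact: provable_trans (pq t w) (qr t w).
- move=> p q pq t w; apply: provable_closed => F.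
  have [p' [q' [pq' [agp agq]]]] := pq F.
  exists (teval (@freeop L W A) (ecase p' w) t), (teval (@freeop L W A) (ecase q' w) t).
  split; first exact: pq'.
  by split=> s hs; rewrite /Defs.tval !fam_teval; congr teval; apply: funext => -[|i] //=;
    [exact: (agp s hs) | exact: (agq s hs)].
Qed.

End Provability.

Lemma provable_weaken (L : signature) (W : aclass L) (G H : pset W) :
  (forall (B : finType) (u v : free W B), G B u v -> provable H u v) ->
  forall (A : finType) (p q : free W A), provable G p q -> provable H p q.
Proof.
move=> GH A p q pq; apply: (pq (fun a b => provable H a b)).
- move=> a b [B [u [v [Guv [phi [hphi [cphi [t [w [-> ->]]]]]]]]]].
  apply: provable_ctx; apply: provable_subst hphi cphi _.
  by case: Guv => [/GH|/GH/provable_sym].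
- by move=> a b c; exact: provable_trans.
- by move=> a b; exact: provable_closed.
Qed.

(** * Density of the terms *)

Section Density.
Variables (L : signature) (W : aclass L).
Hypothesis pW : pseudovariety W.

Lemma tests_factor (B : finType) (F : seq (test W B)) :
  exists (P : alg L) (hP : W P) (fP : B -> P), forall t, List.In t F ->
    exists2 h : P -> tS t, is_hom h & tf t = h \o fP.
Proof.
case: pW => _ _ _ pprod punit.
elim: F => [|t F [P [hP [fP IH]]]]; first by exists (unit_alg L), punit, (fun _ => tt).
exists (prod_alg (tS t) P), (pprod _ _ (tU t) hP), (fun b => (tf t b, fP b)).
move=> t' [<-|/IH[h hh ->]]; first by exists fst.
by exists (h \o snd) => // o x /=; rewrite hh.
Qed.

Section Subalgebra.
Variables (P : alg L) (B : Type) (fP : B -> P).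

Definition subalg_gen : alg L :=
  @Alg L {x : P | `[< generated (@aop L P) fP x >]}
    (fun o xs => exist _ (aop (fun i => val (xs i)))
       (asboolT (generated_op (fun i => asboolW (valP (xs i)))))).

Lemma subalg_gen_in : W P -> W subalg_gen.
Proof.
case: pW => _ _ psub _ _; apply: (psub _ _ (fun x : subalg_gen => val x)) => //.
exact: val_inj.
Qed.

Definition subalg_gen_map (b : B) : subalg_gen :=
  exist _ (fP b) (asboolT (generated_gen _ _ b)).

End Subalgebra.

(* Evaluate [y] in the subalgebra of [P] generated by [fP], which lies in [W],
   and push the value forward along the inclusion. *)
Lemma fam_generated (B : finType) (y : free W B) (P : alg L) (hP : W P) (fP : B -> P) :
  generated (@aop L P) fP (fam y hP fP).
Proof.
pose hQ := subalg_gen_in fP hP.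
rewrite -(famP y hQ hP (h := fun x => val x) (fun _ _ => erefl) (subalg_gen_map fP)).
by case: (fam _ _ _) => x /= /asboolP.
Qed.

Lemma generated_dense (B : finType) (y : free W B) (F : seq (test W B)) :
  exists2 z, generated (@freeop L W B) (@free_gen L W B) z & agree F y z.
Proof.
have [P [hP [fP factor]]] := tests_factor F.
have [z gz ez] :=
  generated_image (f := @free_gen L W B) (fam_hom hP fP) (fam_generated y hP fP).
exists z => // t /factor[h hh etf].
by rewrite /Defs.tval etf -!(famP _ hP (tU t) hh) ez.
Qed.

Lemma cont_hom_fam (B : finType) (T : alg L) (hT : W T) (g : free W B -> T) :
  ophom (@freeop L W B) (@aop L T) g -> cont_alg g ->
  forall y, g y = fam y hT (g \o @free_gen L W B).
Proof.
move=> hg cg y; have [F gF] := cg y.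
have [z gz agz] := generated_dense y (Test hT (g \o @free_gen L W B) :: F).
have <- : g z = g y by apply: gF => t ht; apply: agz; right.
have <- : fam z hT (g \o @free_gen L W B) = fam y hT (g \o @free_gen L W B).
  exact: (agz _ (or_introl erefl)).
elim: gz {agz} => [b //|o zs _ IH].
by rewrite hg; congr aop; apply: funext => i; exact: IH.
Qed.

Lemma satP (B : finType) (T : alg L) (hT : W T) (u v : free W B) :
  sat T u v <-> forall f : B -> T, fam u hT f = fam v hT f.
Proof.
split=> [uv f|uv g hg cg]; first exact: uv (fam_hom hT f) (fam_cont hT f).
by rewrite !(cont_hom_fam hT hg cg).
Qed.

End Density.

(** * Restriction to a subpseudovariety *)

Section Restriction.
Variables (L : signature) (U V : aclass L) (sub : forall S, V S -> U S).
Hypotheses (hU : pseudovariety U) (hV : pseudovariety V).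

Lemma restr_hom (A : finType) :
  ophom (@freeop L U A) (@freeop L V A) (@restr L U V sub A).
Proof. by move=> o x; apply: free_eq. Qed.

Lemma restr_gen (A : finType) (a : A) : restr sub (free_gen U a) = free_gen V a.
Proof. exact: free_eq. Qed.

Lemma generated_restr (A : finType) (z : free V A) :
  generated (@freeop L V A) (@free_gen L V A) z -> exists z', restr sub z' = z.
Proof.
have -> : @free_gen L V A = @restr L U V sub A \o @free_gen L U A.
  by apply: funext => a; rewrite /= restr_gen.
by case/(generated_image (@restr_hom A)) => z' _; exists z'.
Qed.

(* [free U A] is compact and [restr sub] continuous, so the image of a closed
   relation is closed. The witnesses are indexed by finite lists of tests and the
   limit is taken along an ultrafilter refining the cofinal filter. *)
Lemma restr_closed_lift (A : finType) (C : free U A -> free U A -> Prop) (p q : free V A) :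
  (forall a b, Defs.closure C a b -> C a b) ->
  (forall F, exists a b, [/\ C a b, agree F p (restr sub a) & agree F q (restr sub b)]) ->
  exists a b, [/\ C a b, restr sub a = p & restr sub b = q].
Proof.
move=> closedC witnesses.
have /choice[ab abP] : forall F, exists ab : free U A * free U A,
    [/\ C ab.1 ab.2, agree F p (restr sub ab.1) & agree F q (restr sub ab.2)].
  by move=> F; have [a [b ?]] := witnesses F; exists (a, b).
have [UF [cofUF pUF uUF]] := ultrafilter_refine (@cofinal_proper (test V A)).
have lim_restr w wl r : (forall t, UF (fun F => Defs.tval (w F) t = Defs.tval wl t)) ->
    (forall F, agree F r (restr sub (w F))) -> restr sub wl = r.
  move=> wlP wr; apply: free_eq => S hS f.
  change (Defs.tval wl (Test (sub hS) f) = fam r hS f).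
  apply: (ultra_limit_uniq pUF (wlP (Test (sub hS) f))).
  by apply: cofUF; exists [:: Test hS f] => F sF; exact: (wr F _ (sF _ (or_introl erefl))).
have [a aP] := free_ultralimit (fun F => (ab F).1) pUF uUF.
have [b bP] := free_ultralimit (fun F => (ab F).2) pUF uUF.
exists a, b; split; first last.
- by apply: lim_restr bP _ => F; case: (abP F).
- by apply: lim_restr aP _ => F; case: (abP F).
apply: closedC => l.
have [F [agF1 agF2]] : exists F, agree l a (ab F).1 /\ agree l b (ab F).2.
  by apply: (filter_ex pUF); apply: (filterI pUF); apply: (filter_forall_in pUF) => t _;
    [exact: aP | exact: bP].
by exists (ab F).1, (ab F).2; case: (abP F).
Qed.

Lemma restr_surj (A : finType) (w : free V A) : exists w', restr sub w' = w.
Proof.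
have [w' [_ [_ <- _]]] : exists a b, [/\ True, restr sub a = w & restr sub b = w].
  apply: restr_closed_lift => // F; have [z gz agz] := generated_dense hV w F.
  by have [z' ez] := generated_restr gz; exists z', z'; rewrite ez.
by exists w'.
Qed.

Lemma restr_fsubst (B A : finType) (g : B -> free U A) (phi : free V B -> free V A) :
  ophom (@freeop L V B) (@freeop L V A) phi -> cont_free phi ->
  (forall b, restr sub (g b) = phi (free_gen V b)) ->
  forall z, restr sub (fsubst g z) = phi (restr sub z).
Proof.
move=> hphi cphi hg z; apply: free_eq => S hS f /=.
pose ev y := fam (phi y) hS f.
have hev : ophom (@freeop L V B) (@aop L S) ev by move=> o x; rewrite /ev hphi.
have cev : cont_alg ev by move=> y; have [F HF] := cphi y (Test hS f); exists F => y' /HF.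
rewrite -/(ev _) (cont_hom_fam hV hS hev cev (restr sub z)) /=.
by congr (fam z); apply: funext => b; rewrite /ev /= -hg.
Qed.

Lemma sat_restr (B : finType) (T : alg L) (hT : V T) (u v : free U B) :
  sat T (restr sub u) (restr sub v) <-> sat T u v.
Proof. by rewrite (satP hV hT) (satP hU (sub hT)). Qed.

End Restriction.

Section Main.
Variables (L : signature) (U V : aclass L).
Hypotheses (hU : pseudovariety U) (hV : pseudovariety V).
Variables (sub : forall S, V S -> U S) (Sigma Gamma : pset U).
Hypothesis hSigma : forall T, V T <-> (U T /\ models Sigma T).
Hypothesis hSh : h_strong Sigma.
Hypothesis hSt : forall (B : finType) (u v : free U B), Sigma u v -> t_strong u v.
Hypothesis hGamma : forall T, U T -> models Gamma T -> V T.

Lemma Sigma_provable (B : finType) (u v : free U B) : Sigma u v -> provable Gamma u v.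
Proof.
move=> Suv; apply: (hSt Suv) => T hT /(hGamma hT) /hSigma[_ mS].
exact: mS.
Qed.

Lemma restr_eq_provable (A : finType) (p q : free U A) :
  restr sub p = restr sub q -> provable Gamma p q.
Proof.
move=> epq; apply: (provable_weaken Sigma_provable); apply: hSh => T hT mT.
by apply/(sat_restr sub hU hV ((hSigma T).2 (conj hT mT)) p q); rewrite epq.
Qed.

Lemma models_pimage (T : alg L) (hT : V T) :
  models (pimage sub Gamma) T -> models Gamma T.
Proof. by move=> mT B u v Guv; apply/(sat_restr sub hU hV hT u v)/mT; exists u, v. Qed.

Definition restr_provable (A : finType) (p q : free V A) :=
  exists p' q', [/\ provable Gamma p' q', restr sub p' = p & restr sub q' = q].

Lemma gamma0_pimage_restr (A : finType) (p q : free V A) :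
  gamma0 (pimage sub Gamma) p q ->
  exists p' q', [/\ gamma0 Gamma p' q', restr sub p' = p & restr sub q' = q].
Proof.
case=> B [u0 [v0 [Guv0 [phi [hphi [cphi [t [w [-> ->]]]]]]]]].
have [u [v [Guv <- <-]]] : exists u v,
    [/\ Gamma u v \/ Gamma v u, restr sub u = u0 & restr sub v = v0].
  case: Guv0 => [[u [v [Guv [-> ->]]]]|[v [u [Guv [-> ->]]]]].
    by exists u, v; split=> //; left.
  by exists u, v; split=> //; right.
have /choice[g hg] : forall b, exists x, restr sub x = phi (free_gen V b).
  by move=> b; exact: restr_surj.
have /choice[w' hw] : forall j, exists x, restr sub x = w j by move=> j; exact: restr_surj.
have lift_ctx x : restr sub (teval (@freeop L U A) (ecase (fsubst g x) w') t) =
                  teval (@freeop L V A) (ecase (phi (restr sub x)) w) t.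
  rewrite (teval_hom _ _ (@restr_hom _ _ _ sub A)); congr teval; apply: funext => -[|j] //=.
  exact: restr_fsubst.
exists (teval (@freeop L U A) (ecase (fsubst g u) w') t),
       (teval (@freeop L U A) (ecase (fsubst g v) w') t).
split; rewrite ?lift_ctx //.
exists B, u, v; split=> //; exists (fsubst g); split; first exact: fsubst_hom.
by split; [exact: fsubst_cont | exists t, w'].
Qed.

Lemma provable_pimage_restr (A : finType) (p q : free V A) :
  provable (pimage sub Gamma) p q -> restr_provable p q.
Proof.
move=> pq; apply: (pq (@restr_provable A)).
- move=> a b /gamma0_pimage_restr[p' [q' [Gpq <- <-]]].
  by exists p', q'; split=> //; exact: provable_gamma0.
- move=> a b c [p1 [q1 [pq1 <- eq1]]] [q2 [r2 [qr2 eq2 <-]]].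
  exists p1, r2; split=> //; apply: provable_trans pq1 (provable_trans _ qr2).
  by apply: restr_eq_provable; rewrite eq1 eq2.
- move=> a b ab; apply: restr_closed_lift => [x y|F]; first exact: provable_closed.
  have [a0 [b0 [[p0 [q0 [pq0 <- <-]]] [aga agb]]]] := ab F.
  by exists p0, q0.
Qed.

End Main.

Theorem proposition4p2 (L : signature) (U V : aclass L)
  (hU : pseudovariety U) (hV : pseudovariety V)
  (sub : forall S, V S -> U S)
  (Sigma : pset U)
  (hSigma : forall T, V T <-> (U T /\ models Sigma T))
  (hSh : h_strong Sigma)
  (hSt : forall (B : finType) (u v : free U B), Sigma B u v -> t_strong u v)
  (Gamma : pset U)
  (hGamma : forall T, U T -> models Gamma T -> V T)
  (hGamma' : h_strong (pimage sub Gamma)) :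
  h_strong Gamma.
Proof.
move=> B u v valid.
have restr_provable_uv : provable (pimage sub Gamma) (restr sub u) (restr sub v).
  apply: hGamma' => T hT mT; apply/(sat_restr sub hU hV hT u v).
  exact: valid _ (sub _ hT) (models_pimage hU hV hT mT).
have [p' [q' [pq' ep eq]]] :=
  provable_pimage_restr hU hV hSigma hSh hSt hGamma restr_provable_uv.
have eq_provable := restr_eq_provable hU hV (sub := sub) hSigma hSh hSt hGamma.
apply: provable_trans (eq_provable _ _ _ (esym ep)) _.
exact: provable_trans pq' (eq_provable _ _ _ eq).
Qed.
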